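(* Let $(X,d)$ be a compact doubling metric space with $\operatorname{diam}(X,d)=1/2$ and $(\mathcal S,D_2)$ a hyperbolic filling with parameters $a\ge\lambda\ge6$. Let $\rho:\mathcal S\to(0,\infty)$ satisfy (H1), (H2) and (H3'). Then there is a constant $K_2\ge1$ such that for all distinct $x,y\in X$ there exists $k_0$ (depending on $x,y$) such that for all $k\ge k_0$, if $u,v\in\mathcal S_k$ with $x\in B_u$, $y\in B_v$, then every path $\gamma$ in $(\mathcal S,D_2)$ joining $u$ and $v$ satisfies $\hat\ell_1(\gamma)\ge K_2^{-1}\pi(c(x,y))$.
   Context: Hyperbolic filling: $X_0\subset X_1\subset\cdots$ increasing, $X_n$ maximal $a^{-n}$-separated in $X$ ($X_0=\{x_0\}$); $\mathcal S_n=\{(x,n):x\in X_n\}$, $\mathcal S=\bigcup_n\mathcal S_n$, $\pi_1(x,n)=x$, $\pi_2(x,n)=n$, $v_0=(x_0,0)$, $B_v=B(\pi_1(v),a^{-\pi_2(v)})$. Each $(x,n)$, $n\ge1$, has a fixed parent $(y,n-1)$ with $d(x,y)=\min_{z\in X_{n-1}}d(x,z)$; genealogy $g(v)=(v_0,\dots,v_k=v)$. Graph $(\mathcal S,D_2)$: edges vertex–parent (vertical) and horizontal edges between distinct $(x,n),(y,n)$ with $B(x,\lambda a^{-n})\cap B(y,\lambda a^{-n})\ne\emptyset$. Paths: vertex sequences with consecutive ones adjacent. For $w\in\mathcal S_k$, $\Gamma_k(w)$: horizontal paths $(u_1,\dots,u_n)$ in $\mathcal S_{k+1}$ with $\pi_1(u_1)\in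 B_w$, $\pi_1(u_n)\notin B(\pi_1(w),2a^{-k})$. $\pi(u)=\prod_{w\in g(u)}\rho(w)$; $\rho^*(u)=\min\{\rho(w):\pi_2(w)=\pi_2(u),D_2(u,w)\le1\}$, $\pi^*(u)$ the same with $\pi$; $L_h(\gamma,\rho)=\sum_{j}\rho^*(u_j)\wedge\rho^*(u_{j+1})$ for horizontal $\gamma=(u_1,\dots,u_N)$. For distinct $x,y$: $\tilde n$ largest with $\{x,y\}\subset B(\tilde z,2a^{-\tilde n})$ for some $(\tilde z,\tilde n)\in\mathcal S$, $c(x,y)$ the set of such $(\tilde z,\tilde n)$, $\pi(c(x,y))=\max_{c(x,y)}\pi$. (H1) $0<\eta_-\le\rho\le\eta_+<1$. (H2) $\pi(u)\le K_0\pi(w)$ for horizontally adjacent $u,w$, some $K_0\ge1$. (H3') for all $k\ge0$, $w\in\mathcal S_k$, $\gamma\in\Gamma_k(w)$: $L_h(\gamma,\rho)\ge1$. Edge length: $\hat\ell_1(\{u,w\})=\pi^*(u)\wedge\pi^*(w)$ for a horizontal edge, and $\hat\ell_1(\{u,w\})=K_0\eta_-^{-1}\pi^*(w)$ if $u$ is the parent of $w$; for a path $\gamma=(v_1,\dots,v_N)$, $\hat\ell_1(\gamma)=\sum_{i=1}^{N-1}\hat\ell_1(\{v_i,v_{i+1}\})$. *)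

From HB Require Import structures.
From mathcomp Require Import all_boot all_order all_algebra.
From mathcomp Require Import all_classical all_reals.

Set Implicit Arguments.
Unset Strict Implicit.
Unset Printing Implicit Defensive.

Import Order.TTheory GRing.Theory Num.Theory.
Local Open Scope ring_scope.
Local Open Scope classical_set_scope.

Definition is_metric (R : realType) (X : Type) (d : X -> X -> R) : Prop :=
  (forall x y, 0 <= d x y) /\ (forall x y, d x y = 0 <-> x = y) /\
  (forall x y, d x y = d y x) /\ (forall x y z, d x z <= d x y + d y z).

(* compactness of a metric space = sequential compactness *)
Definition seq_compact (R : realType) (X : Type) (d : X -> X -> R) : Prop :=
  forall u : nat -> X, exists phi : nat -> nat,
    (forall n, (phi n < phi n.+1)%N) /\
    exists l : X, forall e : R, 0 < e -> exists N : nat,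
      forall n, (N <= n)%N -> d (u (phi n)) l < e.

Definition doubling (R : realType) (X : Type) (d : X -> X -> R) : Prop :=
  exists N : nat, forall (x : X) (r : R), 0 < r ->
    exists c : nat -> X, forall y, d x y < 2 * r ->
      exists i : nat, (i < N)%N /\ d (c i) y < r.

Definition diam (R : realType) (X : Type) (d : X -> X -> R) : R :=
  sup [set r | exists x y, r = d x y].

(* Xs n x : x belongs to X_n ;  par x n : first coordinate of the parent of (x,n), n >= 1 *)
Definition hyp_filling (R : realType) (X : Type) (d : X -> X -> R) (a : R)
  (Xs : nat -> X -> Prop) (x0 : X) (par : X -> nat -> X) : Prop :=
  (forall x, Xs 0%N x <-> x = x0) /\
  (forall n x, Xs n x -> Xs n.+1 x) /\
  (forall n,
     (forall x y, Xs n x -> Xs n y -> x <> y -> a ^- n <= d x y) /\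
     (forall z, ~ Xs n z -> exists x, Xs n x /\ d z x < a ^- n)) /\
  (forall n x, Xs n.+1 x ->
     Xs n (par x n.+1) /\ (forall z, Xs n z -> d x (par x n.+1) <= d x z)).

Definition inS (X : Type) (Xs : nat -> X -> Prop) (v : X * nat) : Prop :=
  Xs v.2 v.1.

Definition inB (R : realType) (X : Type) (d : X -> X -> R) (a : R)
  (x : X) (v : X * nat) : Prop := d v.1 x < a ^- v.2.

Definition horiz (R : realType) (X : Type) (d : X -> X -> R) (a lam : R)
  (Xs : nat -> X -> Prop) (u w : X * nat) : Prop :=
  inS Xs u /\ inS Xs w /\ u.2 = w.2 /\ u.1 <> w.1 /\
  exists z, d u.1 z < lam * a ^- u.2 /\ d w.1 z < lam * a ^- w.2.

Definition is_parent (X : Type) (Xs : nat -> X -> Prop) (par : X -> nat -> X)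
  (u w : X * nat) : Prop :=
  inS Xs u /\ inS Xs w /\ exists n, w.2 = n.+1 /\ u = (par w.1 n.+1, n).

Definition adj (R : realType) (X : Type) (d : X -> X -> R) (a lam : R)
  (Xs : nat -> X -> Prop) (par : X -> nat -> X) (u w : X * nat) : Prop :=
  horiz d a lam Xs u w \/ is_parent Xs par u w \/ is_parent Xs par w u.

Fixpoint chainP (A : Type) (r : A -> A -> Prop) (x : A) (s : seq A) : Prop :=
  match s with
  | [::] => True
  | y :: t => r x y /\ chainP r y t
  end.

Fixpoint sum_pairs (R : realType) (A : Type) (f : A -> A -> R) (s : seq A) : R :=
  match s with
  | x :: ((y :: _) as t) => f x y + sum_pairs f t
  | _ => 0
  end.

Fixpoint piF (R : realType) (X : Type) (rho : X * nat -> R)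
  (par : X -> nat -> X) (x : X) (n : nat) : R :=
  match n with
  | 0%N => rho (x, 0%N)
  | m.+1 => rho (x, m.+1) * piF rho par (par x m.+1) m
  end.

Definition pi_ (R : realType) (X : Type) (rho : X * nat -> R)
  (par : X -> nat -> X) (v : X * nat) : R := piF rho par v.1 v.2.

(* f^*(u) = min { f w : pi_2 w = pi_2 u, D_2(u,w) <= 1 } (finite set; min = inf) *)
Definition star (R : realType) (X : Type) (d : X -> X -> R) (a lam : R)
  (Xs : nat -> X -> Prop) (f : X * nat -> R) (u : X * nat) : R :=
  inf [set f w | w in [set w | w = u \/ horiz d a lam Xs u w]].

Definition L_h (R : realType) (X : Type) (d : X -> X -> R) (a lam : R)
  (Xs : nat -> X -> Prop) (rho : X * nat -> R) (gam : seq (X * nat)) : R :=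
  sum_pairs (fun u w => Num.min (star d a lam Xs rho u) (star d a lam Xs rho w)) gam.

Definition Gamma (R : realType) (X : Type) (d : X -> X -> R) (a lam : R)
  (Xs : nat -> X -> Prop) (k : nat) (w : X * nat) (gam : seq (X * nat)) : Prop :=
  exists u t, gam = u :: t /\ inS Xs u /\ u.2 = k.+1 /\
    chainP (horiz d a lam Xs) u t /\ inB d a u.1 w /\
    ~ (d w.1 (last u t).1 < 2 * a ^- k).

Definition H1 (R : realType) (X : Type) (Xs : nat -> X -> Prop)
  (rho : X * nat -> R) (eta_m eta_p : R) : Prop :=
  0 < eta_m /\ eta_m <= eta_p /\ eta_p < 1 /\
  forall v, inS Xs v -> eta_m <= rho v /\ rho v <= eta_p.

Definition H2 (R : realType) (X : Type) (d : X -> X -> R) (a lam : R)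
  (Xs : nat -> X -> Prop) (par : X -> nat -> X) (rho : X * nat -> R) (K0 : R) : Prop :=
  1 <= K0 /\ forall u w, horiz d a lam Xs u w -> pi_ rho par u <= K0 * pi_ rho par w.

Definition H3' (R : realType) (X : Type) (d : X -> X -> R) (a lam : R)
  (Xs : nat -> X -> Prop) (rho : X * nat -> R) : Prop :=
  forall (k : nat) (w : X * nat) (gam : seq (X * nat)),
    inS Xs w -> w.2 = k -> Gamma d a lam Xs k w gam -> 1 <= L_h d a lam Xs rho gam.

Definition edge_len (R : realType) (X : Type) (d : X -> X -> R) (a lam : R)
  (Xs : nat -> X -> Prop) (par : X -> nat -> X) (rho : X * nat -> R)
  (K0 eta_m : R) (u w : X * nat) : R :=
  let ps := star d a lam Xs (pi_ rho par) in
  if `[< horiz d a lam Xs u w >] then Num.min (ps u) (ps w)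
  else if `[< is_parent Xs par u w >] then K0 / eta_m * ps w
  else if `[< is_parent Xs par w u >] then K0 / eta_m * ps u
  else 0.

Definition ell_hat (R : realType) (X : Type) (d : X -> X -> R) (a lam : R)
  (Xs : nat -> X -> Prop) (par : X -> nat -> X) (rho : X * nat -> R)
  (K0 eta_m : R) (gam : seq (X * nat)) : R :=
  sum_pairs (edge_len d a lam Xs par rho K0 eta_m) gam.

Definition cset (R : realType) (X : Type) (d : X -> X -> R) (a : R)
  (Xs : nat -> X -> Prop) (x y : X) (v : X * nat) : Prop :=
  inS Xs v /\ d v.1 x < 2 * a ^- v.2 /\ d v.1 y < 2 * a ^- v.2 /\
  forall w, inS Xs w -> d w.1 x < 2 * a ^- w.2 -> d w.1 y < 2 * a ^- w.2 ->
    (w.2 <= v.2)%N.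

(* pi(c(x,y)) = max over c(x,y) of pi (finite set; max = sup) *)
Definition pi_c (R : realType) (X : Type) (d : X -> X -> R) (a : R)
  (Xs : nat -> X -> Prop) (par : X -> nat -> X) (rho : X * nat -> R) (x y : X) : R :=
  sup [set pi_ rho par v | v in cset d a Xs x y].

From HB Require Import structures.
From mathcomp Require Import all_boot all_order all_algebra.
From mathcomp Require Import all_classical all_reals.
From mathcomp Require Import lra zify.
From Stdlib Require List.
Import Order.TTheory GRing.Theory Num.Theory.
Local Open Scope ring_scope.
Set Implicit Arguments.
Unset Strict Implicit.
Unset Printing Implicit Defensive.

(* Write e_n = a^-n.  Fix w at level m and a lower bound P for pi on the level-m
   vertices near w.  A path below level m that starts in B_w and first leaves
   B(w, 5/2 e_m) projects to a horizontal path at level m+1: horizontal edges at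
   level m+1 are kept, edges between deeper vertices collapse onto level-(m+1)
   ancestors, and a deeper excursion that wanders far from the current ancestor q
   is itself such a path for q and the bound rho*(q) P, so by induction on the
   depth it pays for the horizontal edge it induces.  The projection lies in
   Gamma_m(w), hence has L_h >= 1 by (H3'), and every term rho* P of it is paid
   by K0^2 times the hat-l_1 length of the corresponding piece of the path.
   For (z, n) in c(x, y), take w the level-(n+2) ancestor of u and
   P = eta^2 pi(z, n) / K0 (by (H1) along the genealogy and (H2) near z); since
   y is far from x, a path from u to v leaves B(w, 5/2 e_(n+2)), unless it first
   climbs to level n+2, where the vertical edge alone costs at least P. *)

Lemma chainP_cat (A : Type) (r : A -> A -> Prop) x s1 s2 :
  chainP r x (s1 ++ s2) <-> chainP r x s1 /\ chainP r (last x s1) s2.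
Proof. by elim: s1 x => [|y s1 IH] x /=; [tauto | rewrite IH; tauto]. Qed.

Lemma chainP_rcons (A : Type) (r : A -> A -> Prop) x s b :
  chainP r x (rcons s b) <-> chainP r x s /\ r (last x s) b.
Proof. by rewrite -cats1 chainP_cat /=; tauto. Qed.

Lemma sum_pairs_cat (R : realType) (A : Type) (f : A -> A -> R) x s1 s2 :
  sum_pairs f (x :: s1 ++ s2) = sum_pairs f (x :: s1) + sum_pairs f (last x s1 :: s2).
Proof.
elim: s1 x => [|y s1 IH] x; first by rewrite /= add0r.
change (f x y + sum_pairs f (y :: s1 ++ s2) =
  f x y + sum_pairs f (y :: s1) + sum_pairs f (last y s1 :: s2)).
by rewrite IH addrA.
Qed.

Lemma Forall_cat (A : Type) (P : A -> Prop) (s1 s2 : seq A) :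
  List.Forall P (s1 ++ s2) <-> List.Forall P s1 /\ List.Forall P s2.
Proof. exact: List.Forall_app. Qed.

Lemma Forall_last (A : Type) (P : A -> Prop) x s : List.Forall P (x :: s) -> P (last x s).
Proof. by elim: s x => [|y s IH] x /List.Forall_cons_iff [Px Ps] //=; apply: IH. Qed.

Lemma Forall_bounded (A : Type) (f : A -> nat) (s : seq A) :
  exists N, List.Forall (fun v => (f v <= N)%N) s.
Proof.
elim: s => [|v s [N HN]]; first by exists 0%N.
exists (maxn (f v) N); constructor; first exact: leq_maxl.
by apply: List.Forall_impl HN => u Hu; rewrite leq_max Hu orbT.
Qed.

Lemma split_at_first (A : Type) (P : A -> Prop) (s : seq A) :
  List.Forall P s \/ exists s1 b s2, [/\ s = s1 ++ b :: s2, List.Forall P s1 & ~ P b].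
Proof.
elim: s => [|x s IH]; first by left.
have [Px|nPx] := pselect (P x); last by right; exists [::], x, s.
case: IH => [Hs|[s1 [b [s2 [-> Hs1 Hb]]]]]; first by left; constructor.
by right; exists (x :: s1), b, s2; split => //; constructor.
Qed.

Lemma sup_le_ge0 (R : realType) (A : set R) b :
  0 <= b -> (forall r, A r -> r <= b) -> sup A <= b.
Proof.
move=> b0 Ab; have [->|/set0P A0] := eqVneq A set0; first by rewrite sup0.
exact: ge_sup.
Qed.

Section HyperbolicFilling.
Variables (R : realType) (X : Type) (d : X -> X -> R) (a lam : R)
  (Xs : nat -> X -> Prop) (x0 : X) (par : X -> nat -> X)
  (rho : X * nat -> R) (eta_m K0 : R).
Hypotheses (d_metric : is_metric d) (lam_ge6 : 6 <= lam) (lam_le_a : lam <= a).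
Hypothesis filling : hyp_filling d a Xs x0 par.
Hypotheses (eta_gt0 : 0 < eta_m) (eta_le_rho : forall v, inS Xs v -> eta_m <= rho v).
Hypotheses (K0_ge1 : 1 <= K0)
  (pi_horiz : forall u w, horiz d a lam Xs u w -> pi_ rho par u <= K0 * pi_ rho par w).
Hypothesis Lh_ge1 : H3' d a lam Xs rho.

Local Notation e n := (a ^- n).
Local Notation S := (inS Xs).
Local Notation hz := (horiz d a lam Xs).
Local Notation adjr := (adj d a lam Xs par).
Local Notation pi := (pi_ rho par).
Local Notation rs := (star d a lam Xs rho).
Local Notation ps := (star d a lam Xs pi).
Local Notation el := (edge_len d a lam Xs par rho K0 eta_m).
Local Notation ell := (ell_hat d a lam Xs par rho K0 eta_m).
Local Notation Lh := (L_h d a lam Xs rho).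

Lemma dxx x : d x x = 0. Proof. by case: d_metric => _ [H _]; apply/H. Qed.
Lemma d_sym x y : d x y = d y x. Proof. by case: d_metric => _ [_ []]. Qed.
Lemma d_tri x y z : d x z <= d x y + d y z. Proof. by case: d_metric => _ [_ [_]]. Qed.

Lemma d_gt0 x y : x <> y -> 0 < d x y.
Proof.
case: d_metric => d_ge0 [d_eq0 _] Hxy.
by rewrite lt_def d_ge0 andbT; apply/eqP => /d_eq0.
Qed.

Lemma a_ge6 : 6 <= a. Proof. exact: le_trans lam_ge6 lam_le_a. Qed.
Lemma a_gt0 : 0 < a. Proof. by have := a_ge6; lra. Qed.
Lemma e_gt0 n : 0 < e n. Proof. by rewrite invr_gt0 exprn_gt0 // a_gt0. Qed.

Lemma e_addn n j : e (n + j) * a ^+ j = e n.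
Proof.
by rewrite exprD invfM -mulrA mulVf ?mulr1 // expf_neq0 // gt_eqF // a_gt0.
Qed.

Lemma lam_eS_le n : lam * e n.+1 <= e n.
Proof. by rewrite -(e_addn n 1) addn1 expr1 mulrC ler_wpM2l // ltW // e_gt0. Qed.

Lemma eS_le n : 6 * e n.+1 <= e n.
Proof. have := lam_eS_le n; have := e_gt0 n.+1; have := lam_ge6; nra. Qed.

Lemma e_nonincr m n : (m <= n)%N -> e n <= e m.
Proof.
move=> /subnK <-; elim: (n - m)%N => [|k IH]; first by rewrite add0n.
by rewrite addSn; apply: le_trans IH; have := eS_le (k + m); have := e_gt0 (k + m).+1; lra.
Qed.

Lemma ltn_of_e_lt m n : e n < e m -> (m < n)%N.
Proof. by apply: contraTT; rewrite -leqNgt -leNgt; apply: e_nonincr. Qed.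

Lemma e_eventually_lt r : 0 < r -> exists k0, forall k, (k0 <= k)%N -> e k < r.
Proof.
move=> r_gt0; have a_ge6 := a_ge6.
have pow_ge n : (n%:R : R) <= a ^+ n.
  elim: n => [|n IH]; first by rewrite expr0 ler01.
  have : 1 <= a ^+ n by apply: exprn_ege1; lra.
  by rewrite exprS -natr1; nra.
exists (Num.Def.archi_bound r^-1) => k Hk.
set N := Num.Def.archi_bound r^-1 in Hk *.
apply: le_lt_trans (e_nonincr Hk) _.
have r1_lt : r^-1 < N%:R by rewrite archi_boundP // invr_ge0 ltW.
rewrite -[r]invrK ltf_pV2 ?posrE ?invr_gt0 ?exprn_gt0 ?a_gt0 //.
exact: lt_le_trans r1_lt (pow_ge _).
Qed.

Lemma parent_in n x : Xs n.+1 x -> Xs n (par x n.+1).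
Proof. by case: filling => _ [_ [_ /(_ n x) H]] /H []. Qed.

Lemma net_covers n p : exists q, Xs n q /\ d q p < e n.
Proof.
have [Xp|nXp] := pselect (Xs n p); first by exists p; rewrite dxx e_gt0.
case: filling => _ [_ [/(_ n) [_ /(_ p nXp) [q [Xq Dq]]] _]].
by exists q; rewrite d_sym.
Qed.

Lemma parent_near n x : Xs n.+1 x -> d x (par x n.+1) < e n.
Proof.
move=> Xx; case: filling => _ [_ [_ /(_ _ _ Xx) [_ nearest]]].
have [q [Xq Dq]] := net_covers n x.
by apply: le_lt_trans (nearest _ Xq) _; rewrite d_sym.
Qed.

Lemma horiz_inv u w : hz u w -> [/\ S u, S w & u.2 = w.2].
Proof. by case=> [? [? [? _]]]. Qed.

Lemma horiz_dist u w : hz u w -> d u.1 w.1 < 2 * lam * e u.2.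
Proof.
case=> _ [_ [Lw [_ [z [Du Dw]]]]]; rewrite -Lw in Dw.
by have := d_tri u.1 z w.1; rewrite (d_sym z w.1); lra.
Qed.

Lemma near_eq_or_horiz u w : S u -> S w -> u.2 = w.2 -> d u.1 w.1 < lam * e u.2 ->
  u = w \/ hz u w.
Proof.
move=> Su Sw Luw Duw; have [E|NE] := pselect (u.1 = w.1).
  by left; case: u w Luw E {Su Sw Duw} => [? ?] [? ?] /= -> ->.
right; do 4!split=> //; exists w.1; split=> //.
by rewrite dxx -Luw mulr_gt0 ?e_gt0 //; have := lam_ge6; lra.
Qed.

Lemma nbhd_inv u w : w = u \/ hz u w -> w.2 = u.2.
Proof. by case=> [->|/horiz_inv[]]. Qed.

Lemma nbhd_inS u w : S u -> w = u \/ hz u w -> S w.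
Proof. by move=> Su [->|/horiz_inv[]]. Qed.

Lemma nbhd_near m u w : u.2 = m.+1 -> w = u \/ hz u w -> d u.1 w.1 < 2 * e m.
Proof.
move=> Lu [->|/horiz_dist]; first by rewrite dxx mulr_gt0 ?e_gt0.
by rewrite Lu; have := lam_eS_le m; lra.
Qed.

Lemma adj_inS u w : adjr u w -> S u /\ S w.
Proof. by case=> [/horiz_inv[]|[[? [? _]]|[? [? _]]]]. Qed.

Lemma adj_down g b : adjr g b -> (b.2 < g.2)%N -> g.2 = b.2.+1 /\ b = (par g.1 g.2, b.2).
Proof.
case=> [/horiz_inv[_ _ ->]|[[_ [_ [n [-> ->]]]]|[_ [_ [n [-> ->]]]]]] //=.
- by rewrite ltnn.
- by rewrite ltnNge leqnSn.
Qed.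

Lemma adj_deep_dist m g b : adjr g b -> (m.+2 <= g.2)%N -> (m.+2 <= b.2)%N ->
  d g.1 b.1 <= 2 * e m.+1.
Proof.
have e1 := e_gt0 m.+1.
case=> [Hh|[[_ [Sb [n [Lb ->]]]]|[_ [Sg [n [Lg ->]]]]]] /= Hg Hb.
- have := horiz_dist Hh; case: g Hh Hg {Hb} => x [|l] //= _ Hg Dgb.
  have := lam_eS_le l; have := e_nonincr (Hg : (m.+1 <= l)%N); lra.
- rewrite d_sym; have := parent_near (n := n) (x := b.1); rewrite -Lb => /(_ Sb).
  by have := e_nonincr (m := m.+1) (n := n) (ltnW Hg); lra.
- have := parent_near (n := n) (x := g.1); rewrite -Lg => /(_ Sg).
  by have := e_nonincr (m := m.+1) (n := n) (ltnW Hb); lra.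
Qed.

Lemma rho_gt0 v : S v -> 0 < rho v.
Proof. by move=> /eta_le_rho; apply: lt_le_trans. Qed.

Lemma pi_succ x n : pi (x, n.+1) = rho (x, n.+1) * pi (par x n.+1, n).
Proof. by []. Qed.

Lemma pi_gt0 v : S v -> 0 < pi v.
Proof.
case: v => x n; elim: n x => [|n IH] x Sx; first exact: rho_gt0.
by rewrite pi_succ mulr_gt0 ?rho_gt0 // IH //; apply: parent_in.
Qed.

Lemma pi_ge_eta_parent v j : S v -> v.2 = j.+1 -> eta_m * pi (par v.1 j.+1, j) <= pi v.
Proof.
case: v => x n /= Sv Lv; subst n.
by rewrite pi_succ ler_wpM2r ?eta_le_rho // ltW // pi_gt0 //; apply: parent_in.
Qed.

Lemma star_le (f : X * nat -> R) u w : (forall w', w' = u \/ hz u w' -> 0 <= f w') ->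
  w = u \/ hz u w -> star d a lam Xs f u <= f w.
Proof.
move=> f_ge0 Hw; apply: ge_inf; last by exists w.
by exists 0 => _ [w' Hw' <-]; apply: f_ge0.
Qed.

Lemma star_ge (f : X * nat -> R) u b : (forall w', w' = u \/ hz u w' -> b <= f w') ->
  b <= star d a lam Xs f u.
Proof.
move=> Hb; apply: lb_le_inf; first by exists (f u), u => //; left.
by move=> _ [w' Hw' <-]; apply: Hb.
Qed.

Lemma rs_le u w : S u -> w = u \/ hz u w -> rs u <= rho w.
Proof. by move=> Su; apply: star_le => w' /(nbhd_inS Su) /rho_gt0 /ltW. Qed.

Lemma rs_ge0 u : S u -> 0 <= rs u.
Proof. by move=> Su; apply: star_ge => w' /(nbhd_inS Su) /rho_gt0 /ltW. Qed.

Lemma ps_ge0 u : S u -> 0 <= ps u.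
Proof. by move=> Su; apply: star_ge => w' /(nbhd_inS Su) /pi_gt0 /ltW. Qed.

Lemma edge_len_horiz u w : hz u w -> el u w = Num.min (ps u) (ps w).
Proof. by rewrite /edge_len /=; case: asboolP. Qed.

Lemma edge_len_parent g j : S g -> g.2 = j.+1 ->
  el g (par g.1 j.+1, j) = K0 / eta_m * ps g.
Proof.
move=> Sg Lg; rewrite /edge_len /=.
case: asboolP => [/horiz_inv[_ _]|_]; first by rewrite Lg /=; lia.
case: asboolP => [[_ [_ [n [/= Ln /(f_equal snd) /= Lg']]]]|_]; first lia.
case: asboolP => [_ //|[]]; split; last by split=> //; exists j.
by apply: parent_in; rewrite -Lg.
Qed.

Lemma edge_len_ge0 u w : adjr u w -> 0 <= el u w.
Proof.
move=> /adj_inS [Su Sw]; have K0eta : 0 <= K0 / eta_m.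
  by rewrite divr_ge0 // ltW // (lt_le_trans ltr01 K0_ge1).
rewrite /edge_len /=; case: asboolP => _; first by rewrite le_min !ps_ge0.
by case: asboolP => _; [|case: asboolP => _ //]; rewrite mulr_ge0 // ps_ge0.
Qed.

Lemma ell_single x : ell [:: x] = 0. Proof. by []. Qed.

Lemma ell_cons x y s : ell (x :: y :: s) = el x y + ell (y :: s). Proof. by []. Qed.

Lemma ell_ge0 s sg : chainP adjr s sg -> 0 <= ell (s :: sg).
Proof.
elim: sg s => [|y sg IH] s /=; first by rewrite ell_single.
by case=> Hsy Hp; rewrite ell_cons addr_ge0 ?edge_len_ge0 ?IH.
Qed.

Lemma ell_cat s s1 s2 : ell (s :: s1 ++ s2) = ell (s :: s1) + ell (last s s1 :: s2).
Proof. exact: sum_pairs_cat. Qed.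

Lemma ell_rcons s s1 b : ell (s :: rcons s1 b) = ell (s :: s1) + el (last s s1) b.
Proof. by rewrite -cats1 ell_cat /ell_hat /= addr0. Qed.

Lemma Lh_cons x y s : Lh (x :: y :: s) = Num.min (rs x) (rs y) + Lh (y :: s).
Proof. by []. Qed.

(* [ancestor_pt x L t] is the first coordinate of the [t]-th ancestor of [(x, L)];
   [ancestor j v] is meaningful only for [j <= v.2]. *)
Fixpoint ancestor_pt (x : X) (L t : nat) : X :=
  if t is t'.+1 then ancestor_pt (par x L) L.-1 t' else x.

Definition ancestor (j : nat) (v : X * nat) : X * nat := (ancestor_pt v.1 v.2 (v.2 - j), j).

Lemma ancestor_pt_in t L x : Xs L x -> (t <= L)%N -> Xs (L - t) (ancestor_pt x L t).
Proof.
elim: t L x => [|t IH] [|L] x Xx //= Ht.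
by rewrite subSS; apply: IH => //; apply: parent_in.
Qed.

Lemma ancestor_pt_near t L x : Xs L x -> (t <= L)%N ->
  d x (ancestor_pt x L t) <= 6/5 * (e (L - t) - e L).
Proof.
elim: t L x => [|t IH] [|L] x Xx //= Ht; rewrite ?subn0 ?dxx ?subrr ?mulr0 //.
rewrite subSS; have := IH _ _ (parent_in Xx) Ht; have := parent_near Xx.
by have := d_tri x (par x L.+1) (ancestor_pt (par x L.+1) L t); have := eS_le L; lra.
Qed.

Lemma ancestor_pt_parent t L x : (t < L)%N ->
  ancestor_pt x L t.+1 = par (ancestor_pt x L t) (L - t).
Proof.
elim: t L x => [|t IH] [|L] x Ht //.
change (ancestor_pt (par x L.+1) L t.+1 = par (ancestor_pt (par x L.+1) L t) (L.+1 - t.+1)).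
by rewrite IH // subSS.
Qed.

Lemma ancestor_in j v : S v -> (j <= v.2)%N -> S (ancestor j v).
Proof.
by move=> Sv Hj; have := ancestor_pt_in Sv (leq_subr j v.2); rewrite subKn.
Qed.

Lemma ancestor_near j v : S v -> (j <= v.2)%N -> d v.1 (ancestor j v).1 <= 6/5 * e j.
Proof.
move=> Sv Hj; have := ancestor_pt_near Sv (leq_subr j v.2).
by rewrite subKn //; have := e_gt0 v.2; lra.
Qed.

Lemma ancestor_self v : ancestor v.2 v = v.
Proof. by case: v => x n; rewrite /ancestor /= subnn. Qed.

Lemma ancestor_parent j v : (j < v.2)%N -> ancestor j v = (par (ancestor j.+1 v).1 j.+1, j).
Proof.
move=> Hj; rewrite /ancestor /= -subnSK // ancestor_pt_parent; last lia.
by rewrite subKn.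
Qed.

Lemma K0_gt0 : 0 < K0. Proof. exact: lt_le_trans ltr01 K0_ge1. Qed.

Lemma pi_le_K0_nbhd u w : S u -> w = u \/ hz u w -> pi u <= K0 * pi w.
Proof.
move=> Su [->|/pi_horiz //].
by rewrite ler_peMl // ltW // pi_gt0.
Qed.

Lemma pi_le_K0_near u w : S u -> S w -> u.2 = w.2 -> d u.1 w.1 < lam * e u.2 ->
  pi u <= K0 * pi w.
Proof.
move=> Su Sw Luw Duw; apply: pi_le_K0_nbhd => //.
by have [->|] := near_eq_or_horiz Su Sw Luw Duw; [left | right].
Qed.

Lemma star_ge_mul (f : X * nat -> R) u b c : 0 < c ->
  (forall w', w' = u \/ hz u w' -> b <= c * f w') -> b <= c * star d a lam Xs f u.
Proof.
move=> c_gt0 Hb; rewrite -ler_pdivrMl //.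
by apply: star_ge => w' Hw'; rewrite ler_pdivrMl //; apply: Hb.
Qed.

Lemma parent_edge_pays g j : S g -> g.2 = j.+1 ->
  pi (par g.1 j.+1, j) <= el g (par g.1 j.+1, j).
Proof.
move=> Sg Lg; set b := (par g.1 j.+1, j); rewrite edge_len_parent //.
apply: star_ge_mul; first by rewrite divr_gt0 // K0_gt0.
move=> w' Hw'; have Sw' := nbhd_inS Sg Hw'; have Lw' : w'.2 = j.+1 by rewrite (nbhd_inv Hw').
set p := (par w'.1 j.+1, j).
have Sp : S p by apply: parent_in; rewrite -Lw'.
have pi_bp : pi b <= K0 * pi p.
  apply: pi_le_K0_near => //=; first by apply: parent_in; rewrite -Lg.
  have Dg : d g.1 (par g.1 j.+1) < e j by apply: parent_near; rewrite -Lg.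
  have Dw' : d w'.1 (par w'.1 j.+1) < e j by apply: parent_near; rewrite -Lw'.
  have := nbhd_near Lg Hw'; have := d_tri (par g.1 j.+1) g.1 w'.1.
  have := d_tri (par g.1 j.+1) w'.1 (par w'.1 j.+1); rewrite (d_sym _ g.1).
  by have := lam_ge6; have := e_gt0 j; nra.
apply: le_trans pi_bp _; rewrite -mulrA ler_wpM2l ?(ltW K0_gt0) // ler_pdivlMl //.
exact: pi_ge_eta_parent.
Qed.

Definition pi_floor m (w : X * nat) P :=
  forall w', S w' -> w'.2 = m -> d w.1 w'.1 < 6 * e m -> P <= pi w'.

Lemma rs_floor_le_pi m w P q q' : pi_floor m w P -> 0 <= P -> S q -> q.2 = m.+1 ->
  d w.1 q.1 < 3 * e m -> q' = q \/ hz q q' -> rs q * P <= pi q'.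
Proof.
move=> floor P_ge0 Sq Lq Dwq Hq'.
have Sq' := nbhd_inS Sq Hq'; have Lq' : q'.2 = m.+1 by rewrite (nbhd_inv Hq').
have Dqq' := nbhd_near Lq Hq'.
case: q' Hq' Sq' Lq' Dqq' => x n Hq' Sx /= Ln Dqx; subst n.
rewrite pi_succ ler_pM ?rs_ge0 ?(rs_le Sq Hq') //.
apply: floor; [exact: parent_in | by [] |].
have := parent_near Sx; have := d_tri w.1 q.1 x; have := d_tri w.1 x (par x m.+1).
by lra.
Qed.

Lemma rs_floor_le_ps m w P q : pi_floor m w P -> 0 <= P -> S q -> q.2 = m.+1 ->
  d w.1 q.1 < 3 * e m -> rs q * P <= ps q.
Proof.
move=> floor P_ge0 Sq Lq Dwq; apply: star_ge => q'.
exact: rs_floor_le_pi floor P_ge0 Sq Lq Dwq.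
Qed.

Lemma pi_floor_succ m w P q : pi_floor m w P -> 0 <= P -> S q -> q.2 = m.+1 ->
  d w.1 q.1 < 3 * e m -> pi_floor m.+1 q (rs q * P).
Proof.
move=> floor P_ge0 Sq Lq Dwq q' Sq' Lq' Dqq'; apply: (rs_floor_le_pi floor P_ge0 Sq Lq Dwq).
have Dqq'' : d q.1 q'.1 < lam * e q.2.
  by rewrite Lq; have := lam_ge6; have := e_gt0 m.+1; nra.
by have [<-|] := near_eq_or_horiz Sq Sq' (etrans Lq (esym Lq')) Dqq''; [left | right].
Qed.

Lemma horiz_edge_pays m w P s s' : pi_floor m w P -> 0 <= P -> s.2 = m.+1 -> hz s s' ->
  d w.1 s.1 < 3 * e m -> P * Num.min (rs s) (rs s') <= K0 ^+ 2 * el s s'.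
Proof.
move=> floor P_ge0 Ls Hss' Dws; have [Ss Ss' _] := horiz_inv Hss'.
have le_rs : P * Num.min (rs s) (rs s') <= rs s * P.
  by rewrite mulrC ler_wpM2r // ge_min lexx.
have rs_ps := rs_floor_le_ps floor P_ge0 Ss Ls Dws.
have rs_pi := rs_floor_le_pi floor P_ge0 Ss Ls Dws (or_introl erefl).
have pi_ps : pi s <= K0 ^+ 2 * ps s'.
  apply: star_ge_mul => [|w' Hw']; first by rewrite exprn_gt0 // K0_gt0.
  apply: le_trans (pi_horiz Hss') _; rewrite expr2 -mulrA ler_wpM2l ?(ltW K0_gt0) //.
  exact: pi_le_K0_nbhd Hw'.
have K0sq : 1 <= K0 ^+ 2 by rewrite exprn_ege1.
have := ps_ge0 Ss; rewrite edge_len_horiz // [K0 ^+ 2 * _]minr_pMr ?sqr_ge0 // le_min.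
by move=> ps_ge0; apply/andP; split; nra.
Qed.

Definition level_in m D (v : X * nat) : Prop := (m < v.2)%N /\ (v.2 <= m + D)%N.

(* The radius 5/2 e_m leaves the slack e_m / 2 >= 6/5 e_(m+1) needed to pass from
   a vertex to its level-(m+1) ancestor while staying outside B(w, 2 e_m). *)
Definition exit_path m D (w : X * nat) s sg : Prop :=
  [/\ S s, chainP adjr s sg, List.Forall (level_in m D) (s :: sg),
      List.Forall (fun v => d w.1 v.1 < 5/2 * e m) (belast s sg)
    & 5/2 * e m <= d w.1 (last s sg).1].

Definition shadow m (w : X * nat) P s sg : Prop :=
  exists Q, [/\ chainP hz (ancestor m.+1 s) Q,
    2 * e m <= d w.1 (last (ancestor m.+1 s) Q).1
    & P * Lh (ancestor m.+1 s :: Q) <= K0 ^+ 2 * ell (s :: sg)].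

Definition exit_bound D := forall m w P s sg, S w -> w.2 = m -> 0 <= P ->
  pi_floor m w P -> exit_path m D w s sg -> d w.1 (ancestor m.+1 s).1 < e m ->
  P <= K0 ^+ 2 * ell (s :: sg).

Definition deep_near m (q v : X * nat) : Prop := v.2 <> m.+1 /\ d q.1 v.1 < 5/2 * e m.+1.

Lemma exit_path_split m D w s s1 b s2 : exit_path m D w s (s1 ++ b :: s2) ->
  [/\ d w.1 s.1 < 5/2 * e m, d w.1 (last s s1).1 < 5/2 * e m, adjr (last s s1) b,
      List.Forall (level_in m D) (s :: s1) & level_in m D b].
Proof.
case=> _ /chainP_cat [_ [Hgb _]] + Hnear _.
rewrite -cat_cons Forall_cat => -[Hlev1 /List.Forall_cons_iff [Hlevb _]].
split=> //; first by case: s1 Hnear {Hgb Hlev1} => [|y s1] /List.Forall_cons_iff [].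
by move: Hnear; rewrite belast_cat Forall_cat => -[_ /List.Forall_cons_iff []].
Qed.

Lemma exit_path_suffix m D w s s1 b s2 :
  exit_path m D w s (s1 ++ b :: s2) -> exit_path m D w b s2.
Proof.
case=> _ /chainP_cat [_ [Hgb Hp]] Hlev Hnear Hlast; split.
- by case: (adj_inS Hgb).
- exact: Hp.
- by move: Hlev; rewrite -cat_cons Forall_cat => -[].
- by move: Hnear; rewrite belast_cat Forall_cat => -[_ /List.Forall_cons_iff []].
- by move: Hlast; rewrite last_cat.
Qed.

Lemma ancestor_horiz j q b : S q -> q.2 = j -> S b -> (j <= b.2)%N ->
  5/2 * e j <= d q.1 b.1 -> d q.1 b.1 < 9/2 * e j -> hz q (ancestor j b).
Proof.
move=> Sq Lq Sb Lb Dfar Dnear; have Db := ancestor_near Sb Lb.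
have Dqa : d q.1 (ancestor j b).1 < lam * e q.2.
  rewrite Lq; have := d_tri q.1 b.1 (ancestor j b).1.
  by have := lam_ge6; have := e_gt0 j; nra.
have [Eq|//] := near_eq_or_horiz Sq (ancestor_in Sb Lb) Lq Dqa.
by move: Dfar; rewrite Eq (d_sym _ b.1); have := e_gt0 j; lra.
Qed.

Lemma exit_path_excursion m D w s s1 b s2 : exit_path m D.+1 w s (s1 ++ b :: s2) ->
  List.Forall (deep_near m (ancestor m.+1 s)) (s :: s1) -> b.2 <> m.+1 ->
  5/2 * e m.+1 <= d (ancestor m.+1 s).1 b.1 ->
  exit_path m.+1 D (ancestor m.+1 s) s (rcons s1 b).
Proof.
move=> Hex Hdeep Lb Dqb; have [_ _ Hgb Hlev1 [Lb1 Lb2]] := exit_path_split Hex.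
case: Hex => Ss /chainP_cat [Hp1 _] _ _ _; split=> //.
- by apply/chainP_rcons.
- rewrite -cats1 -cat_cons Forall_cat; split.
    apply: List.Forall_impl (List.Forall_and Hlev1 Hdeep) => v [[? ?] [? _]].
    by split; lia.
  by constructor; [split; lia | constructor].
- by rewrite belast_rcons; apply: List.Forall_impl Hdeep => v [].
- by rewrite last_rcons.
Qed.

Section Projection.
Variables (m : nat) (w : X * nat) (P : R).
Hypotheses (P_ge0 : 0 <= P) (floor : pi_floor m w P).

Lemma shadow_nil s sg : chainP adjr s sg -> 2 * e m <= d w.1 (ancestor m.+1 s).1 ->
  shadow m w P s sg.
Proof.
move=> Hp Dfar; exists [::]; split=> //.
by rewrite /L_h /= mulr0 mulr_ge0 ?sqr_ge0 ?ell_ge0.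
Qed.

Lemma shadow_cat s s1 b s2 : chainP adjr s (s1 ++ b :: s2) ->
  ancestor m.+1 b = ancestor m.+1 s \/
    hz (ancestor m.+1 s) (ancestor m.+1 b) /\
    P * Num.min (rs (ancestor m.+1 s)) (rs (ancestor m.+1 b))
      <= K0 ^+ 2 * ell (s :: rcons s1 b) ->
  shadow m w P b s2 -> shadow m w P s (s1 ++ b :: s2).
Proof.
move=> Hp link [Q [HQ Dfar HL]].
have ell1 : 0 <= K0 ^+ 2 * ell (s :: rcons s1 b).
  move/chainP_cat: Hp => [Hp1 [Hgb _]].
  by rewrite mulr_ge0 ?sqr_ge0 // ell_ge0 // chainP_rcons.
have Hell : ell (s :: s1 ++ b :: s2) = ell (s :: rcons s1 b) + ell (b :: s2).
  by rewrite -cat_rcons ell_cat last_rcons.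
case: link => [Eb|[Hqb pay]].
  by exists Q; rewrite -Eb Hell [K0 ^+ 2 * _]mulrDr; split=> //; lra.
exists (ancestor m.+1 b :: Q); rewrite Hell Lh_cons !mulrDr.
by split=> //; lra.
Qed.

Lemma shadow_top D s s' sg : s.2 = m.+1 -> exit_path m D w s (s' :: sg) ->
  shadow m w P s' sg -> shadow m w P s (s' :: sg).
Proof.
move=> Ls Hex; have [Ss [Hss' Hp] Hlev Hnear _] := Hex.
have Ws : d w.1 s.1 < 3 * e m.
  by case/List.Forall_cons_iff: Hnear => + _; have := e_gt0 m; lra.
have As : ancestor m.+1 s = s by rewrite -Ls ancestor_self.
apply: (@shadow_cat s [::] s'); first by split.
case: Hss' => [Hh|[[_ [_ [k [Lk Es]]]]|[_ [_ [k [Lk Es']]]]]].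
- have [_ _ Lss'] := horiz_inv Hh.
  have As' : ancestor m.+1 s' = s' by rewrite -Ls Lss' ancestor_self.
  right; rewrite As As'; split=> //.
  rewrite ell_rcons ell_single add0r.
  exact: (horiz_edge_pays floor P_ge0 Ls Hh Ws).
- left; have Lk' : k = m.+1 by rewrite -Ls Es.
  subst k; rewrite As ancestor_parent ?Lk //.
  have -> : ancestor m.+2 s' = s' by rewrite -Lk ancestor_self.
  by rewrite Es.
- exfalso; move: Hlev; rewrite Es' => /List.Forall_cons_iff [_].
  by move=> /List.Forall_cons_iff [[/= Lm _] _]; lia.
Qed.

Lemma shadow_climb D s s1 b s2 : exit_path m D w s (s1 ++ b :: s2) ->
  (m.+1 < (last s s1).2)%N -> d (ancestor m.+1 s).1 (last s s1).1 < 5/2 * e m.+1 ->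
  b.2 = m.+1 -> shadow m w P b s2 -> shadow m w P s (s1 ++ b :: s2).
Proof.
move=> Hex Lg Dqg Lb; have [_ Wg Hgb /List.Forall_cons_iff [[Ls _] _] _] := exit_path_split Hex.
have [Ss Hp _ _ _] := Hex; set q := ancestor m.+1 s in Dqg *; set g := last s s1 in Lg Dqg Wg Hgb *.
have [Sg Sb] := adj_inS Hgb.
have [Eg Eb] : g.2 = b.2.+1 /\ b = (par g.1 g.2, b.2) by apply: adj_down; rewrite ?Lb.
have Lg2 : g.2 = m.+2 by rewrite Eg Lb.
have Eb' : b = (par g.1 m.+2, m.+1) by rewrite {1}Eb Lg2 Lb.
have Dgb : d g.1 b.1 < e m.+1 by rewrite Eb' /=; apply: parent_near; rewrite -Lg2.
have Sq : S q := ancestor_in Ss Ls.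
have Dqb : d q.1 b.1 < lam * e q.2.
  have := d_tri q.1 g.1 b.1; have := lam_ge6; have := e_gt0 m.+1; rewrite /=; nra.
have Ab : ancestor m.+1 b = b by rewrite -Lb ancestor_self.
apply: shadow_cat => //; rewrite Ab.
have [Eqb|Hqb] := near_eq_or_horiz Sq Sb (esym Lb) Dqb; first by left.
right; split=> //.
have Wb : d w.1 b.1 < 3 * e m.
  by have := d_tri w.1 g.1 b.1; have := eS_le m; have := e_gt0 m.+1; lra.
have pay1 := rs_floor_le_pi floor P_ge0 Sb Lb Wb (or_introl erefl).
have pay2 : pi b <= el g b by rewrite Eb'; apply: parent_edge_pays.
have le_rs : P * Num.min (rs q) (rs b) <= rs b * P.
  by rewrite mulrC ler_wpM2r // ge_min lexx orbT.
have := ell_ge0 (proj1 ((chainP_cat _ _ _ _).1 Hp)); have := edge_len_ge0 Hgb.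
have : 1 <= K0 ^+ 2 by rewrite exprn_ege1.
by rewrite ell_rcons; nra.
Qed.

Lemma shadow_excursion D s s1 b s2 : exit_bound D -> exit_path m D.+1 w s (s1 ++ b :: s2) ->
  (m.+1 < s.2)%N -> List.Forall (deep_near m (ancestor m.+1 s)) (s :: s1) ->
  b.2 <> m.+1 -> 5/2 * e m.+1 <= d (ancestor m.+1 s).1 b.1 ->
  shadow m w P b s2 -> shadow m w P s (s1 ++ b :: s2).
Proof.
move=> IH Hex Ls Hdeep Lb Dqb.
have [Ws _ Hgb Hlev1 [Lb1 _]] := exit_path_split Hex.
have [Ss Hp _ _ _] := Hex; set q := ancestor m.+1 s in Hdeep Dqb *.
have Sq : S q := ancestor_in Ss (ltnW Ls).
have Wq : d w.1 q.1 < 3 * e m.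
  have := ancestor_near Ss (ltnW Ls); have := d_tri w.1 s.1 q.1.
  by have := eS_le m; have := e_gt0 m.+1; lra.
have Hstart : d q.1 (ancestor m.+2 s).1 < e m.+1.
  by rewrite /q (ancestor_parent Ls) /= d_sym; apply: parent_near; apply: ancestor_in.
have pay := IH _ _ _ _ _ Sq erefl (mulr_ge0 (rs_ge0 Sq) P_ge0)
  (pi_floor_succ floor P_ge0 Sq erefl Wq) (exit_path_excursion Hex Hdeep Lb Dqb) Hstart.
apply: shadow_cat => //; right; split; last first.
  by apply: le_trans pay; rewrite mulrC ler_wpM2r // ge_min lexx.
have [Lg Dqg] := Forall_last Hdeep; have [Lg1 _] := Forall_last Hlev1.
have Dgb : d (last s s1).1 b.1 <= 2 * e m.+1 by apply: adj_deep_dist Hgb _ _; lia.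
apply: ancestor_horiz Sq erefl (adj_inS Hgb).2 Lb1 Dqb _.
by have := d_tri q.1 (last s s1).1 b.1; have := e_gt0 m.+1; lra.
Qed.

Lemma shadow_deep D s sg : exit_bound D -> (m.+1 < s.2)%N -> exit_path m D.+1 w s sg ->
  (forall s1 b s2, sg = s1 ++ b :: s2 -> shadow m w P b s2) -> shadow m w P s sg.
Proof.
move=> IH Ls Hex Hsuf; set q := ancestor m.+1 s.
have Ss : S s by case: Hex.
have Hs : deep_near m q s.
  split; first by lia.
  by rewrite d_sym; have := ancestor_near Ss (ltnW Ls); have := e_gt0 m.+1; lra.
have [Hall|[s1 [b [s2 [Esg Hs1 Hb]]]]] := split_at_first (deep_near m q) sg.
  apply: shadow_nil; first by case: Hex.
  have [_ Dql] := Forall_last (List.Forall_cons s Hs Hall).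
  case: Hex => _ _ _ _ Dwl; have := d_tri w.1 q.1 (last s sg).1.
  by have := eS_le m; have := e_gt0 m.+1; lra.
have Hsh := Hsuf _ _ _ Esg; subst sg.
have [Lb|/eqP Lb] := eqVneq b.2 m.+1.
  have [_ _ _ Hlev1 _] := exit_path_split Hex.
  have [Lg Dqg] := Forall_last (List.Forall_cons s Hs Hs1).
  have [Lg' _] := Forall_last Hlev1.
  by apply: shadow_climb Hex _ Dqg Lb Hsh; lia.
apply: (shadow_excursion IH Hex Ls (List.Forall_cons s Hs Hs1) Lb _ Hsh).
by rewrite leNgt; apply/negP => Dqb; apply: Hb (conj Lb Dqb).
Qed.

Lemma exit_path_shadow D s sg : exit_bound D -> exit_path m D.+1 w s sg -> shadow m w P s sg.
Proof.
move=> IH; have [n Hn] := ubnP (size sg); elim: n => // n IHn in s sg Hn *.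
move=> Hex; have [_ Hp /List.Forall_cons_iff [[Ls _] _] _ Dlast] := Hex.
have [Lgt|Leq] : (m.+1 < s.2)%N \/ s.2 = m.+1 by lia.
  apply: (shadow_deep IH Lgt Hex) => s1 b s2 Esg.
  apply: IHn; first by move: Hn; rewrite Esg size_cat /=; lia.
  by move: Hex; rewrite Esg; apply: exit_path_suffix.
case: sg Hn Hex Hp Dlast => [|s' sg] Hn Hex Hp Dlast.
  apply: shadow_nil => //; rewrite -Leq ancestor_self.
  by move: Dlast => /=; have := e_gt0 m; lra.
apply: (shadow_top Leq Hex); apply: IHn => //.
exact: (@exit_path_suffix _ _ _ s [::] s' sg Hex).
Qed.

End Projection.

Lemma exit_bound_all D : exit_bound D.
Proof.
elim: D => [|D IH] m w P s sg Sw Lw P_ge0 floor Hex Hstart.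
  by case: Hex => _ _ /List.Forall_cons_iff [[]]; lia.
have [Q [HQ Dfar HL]] := exit_path_shadow P_ge0 floor IH Hex.
have [Ss _ /List.Forall_cons_iff [[Ls _] _] _ _] := Hex.
have Lh1 : 1 <= Lh (ancestor m.+1 s :: Q).
  apply: (Lh_ge1 Sw Lw); exists (ancestor m.+1 s), Q; split=> //.
  split; first exact: ancestor_in.
  do 3!split=> //; first by rewrite /inB Lw.
  by apply/negP; rewrite -leNgt.
by apply: le_trans HL; rewrite ler_peMr.
Qed.

Lemma exit_path_prefix m w u s1 b : S u -> chainP adjr u (rcons s1 b) ->
  List.Forall (fun v => (m < v.2)%N /\ d w.1 v.1 < 5/2 * e m) (u :: s1) ->
  (m < b.2)%N -> 5/2 * e m <= d w.1 b.1 -> exists D, exit_path m D w u (rcons s1 b).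
Proof.
move=> Su Hp Hin Lb Db; have [N HN] := Forall_bounded snd (u :: rcons s1 b).
have Hlev : List.Forall (fun v => (m < v.2)%N) (u :: rcons s1 b).
  rewrite -cats1 -cat_cons Forall_cat; split; last by constructor.
  by apply: List.Forall_impl Hin => v [].
exists N; split=> //.
- by apply: List.Forall_impl (List.Forall_and Hlev HN) => v [? ?]; split; lia.
- by rewrite belast_rcons; apply: List.Forall_impl Hin => v [].
- by rewrite last_rcons.
Qed.

Lemma floor_le_ell m w P u t : S w -> w.2 = m -> 0 <= P -> pi_floor m w P -> S u ->
  (m < u.2)%N -> d w.1 (ancestor m.+1 u).1 < e m -> d w.1 u.1 < 5/2 * e m ->
  chainP adjr u t -> 5/2 * e m <= d w.1 (last u t).1 -> P <= K0 ^+ 2 * ell (u :: t).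
Proof.
move=> Sw Lw P_ge0 floor Su Lu Hstart Wu Hp Dlast.
pose inside v := (m < v.2)%N /\ d w.1 v.1 < 5/2 * e m.
have Hu : inside u by [].
have [Hall|[s1 [b [s2 [Et Hs1 Hb]]]]] := split_at_first inside t.
  by have [_] := Forall_last (List.Forall_cons u Hu Hall); rewrite ltNge Dlast.
subst t; move/chainP_cat: (Hp) => [Hp1 [Hgb Hp2]].
suff : P <= K0 ^+ 2 * ell (u :: rcons s1 b).
  rewrite -cat_rcons ell_cat last_rcons mulrDr.
  by have := mulr_ge0 (sqr_ge0 K0) (ell_ge0 Hp2); lra.
have [Lg Wg] := Forall_last (List.Forall_cons u Hu Hs1).
have [Lb|Lb] := leqP b.2 m; last first.
  have Db : 5/2 * e m <= d w.1 b.1.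
    by rewrite leNgt; apply/negP => Db; apply: Hb.
  have [D Hex] := exit_path_prefix Su (proj2 (chainP_rcons _ _ _ _) (conj Hp1 Hgb))
    (List.Forall_cons u Hu Hs1) Lb Db.
  exact: exit_bound_all Sw Lw P_ge0 floor Hex Hstart.
have [Eg Eb] := adj_down Hgb (leq_ltn_trans Lb Lg).
have Lbm : b.2 = m by apply/eqP; rewrite eqn_leq Lb -ltnS -Eg.
have Eb' : b = (par (last u s1).1 m.+1, m) by rewrite {1}Eb Eg Lbm.
have [Sg Sb] := adj_inS Hgb.
have Dgb : d (last u s1).1 b.1 < e m by rewrite Eb' /=; apply: parent_near; rewrite -Lbm -Eg.
have pay1 : P <= pi b.
  apply: floor => //; have := d_tri w.1 (last u s1).1 b.1.
  by have := e_gt0 m; lra.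
have pay2 : pi b <= el (last u s1) b by rewrite Eb'; apply: parent_edge_pays; rewrite ?Eg ?Lbm.
have := ell_ge0 Hp1; have := edge_len_ge0 Hgb; have : 1 <= K0 ^+ 2 by rewrite exprn_ege1.
by rewrite ell_rcons; nra.
Qed.

Lemma grandparent_floor z n w : S (z, n) -> d z w.1 < 3 * e n ->
  pi_floor n.+2 w (eta_m ^+ 2 * pi (z, n) / K0).
Proof.
move=> Sz Dzw [x l] Sx /= Lx Dwx; subst l.
set p1 := (par x n.+2, n.+1); set p2 := (par p1.1 n.+1, n).
have Sp1 : S p1 by apply: parent_in.
have Sp2 : S p2 by apply: parent_in.
have pi_z : pi (z, n) <= K0 * pi p2.
  apply: pi_le_K0_near => //=; have := parent_near Sx; have := parent_near Sp1.
  have := d_tri z w.1 x; have := d_tri z x p1.1; have := d_tri z p1.1 p2.1.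
  have := ler_wpM2r (ltW (e_gt0 n)) lam_ge6.
  by have := eS_le n; have := eS_le n.+1; have := e_gt0 n.+2; lra.
have := ler_wpM2l (sqr_ge0 eta_m) pi_z.
have := ler_wpM2l (mulr_ge0 (ltW K0_gt0) (ltW eta_gt0)) (pi_ge_eta_parent Sp1 erefl).
have := ler_wpM2l (ltW K0_gt0) (pi_ge_eta_parent Sx erefl).
by rewrite ler_pdivrMr ?K0_gt0 // expr2; lra.
Qed.

Lemma cset_dist_gt x y z n : cset d a Xs x y (z, n) -> e n.+1 < d x y.
Proof.
case=> _ [_ [_ maximal]] /=.
have [z' [Sz' Dz'x]] := net_covers n.+1 x.
have Dz'y : 2 * e n.+1 <= d z' y.
  rewrite leNgt; apply/negP => Dz'y.
  have Dz'x' : d z' x < 2 * e n.+1 by have := e_gt0 n.+1; lra.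
  by have := maximal (z', n.+1) Sz' Dz'x' Dz'y; rewrite /= ltnn.
by have := d_tri z' x y; lra.
Qed.

Lemma cset_pi_le_ell x y c k u v t : cset d a Xs x y c -> 4 * a ^+ 3 * e k < d x y ->
  S u -> u.2 = k -> inB d a x u -> v.2 = k -> inB d a y v ->
  chainP adjr u t -> last u t = v -> eta_m ^+ 2 * pi c <= K0 ^+ 3 * ell (u :: t).
Proof.
case: c => z n Hc Hk Su Lu Hxu Lv Hyv Hp Hlast.
have Hfar := cset_dist_gt Hc; have [Sz [Dzx [Dzy _]]] := Hc; rewrite /= in Sz Dzx Dzy.
rewrite /inB Lu in Hxu; rewrite /inB Lv in Hyv.
have Lnk : (n.+3 < k)%N.
  have Dxy : d x y < 4 * (e n.+3 * a ^+ 3).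
    by rewrite -(addn3 n) e_addn; have := d_tri x z y; rewrite (d_sym x z); lra.
  by apply: ltn_of_e_lt; have := exprn_gt0 3 a_gt0; nra.
have Lun : (n.+2 < u.2)%N by rewrite Lu; lia.
set w := ancestor n.+2 u.
have Sw : S w := ancestor_in Su (ltnW Lun).
have Duw := ancestor_near Su (ltnW Lun).
have ek : e k <= e n.+4 by apply: e_nonincr; lia.
have e1 := eS_le n; have e2 := eS_le n.+1; have e3 := eS_le n.+2.
have e4 := eS_le n.+3; have e5 := e_gt0 n.+4.
have floor : pi_floor n.+2 w (eta_m ^+ 2 * pi (z, n) / K0).
  apply: grandparent_floor Sz _; have := d_tri z x u.1; have := d_tri z u.1 w.1.
  by rewrite (d_sym x u.1); lra.
have Hstart : d w.1 (ancestor n.+3 u).1 < e n.+2.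
  rewrite /w (ancestor_parent Lun) /= d_sym; apply: parent_near.
  exact: ancestor_in Su Lun.
have Dwv : 5/2 * e n.+2 <= d w.1 (last u t).1.
  rewrite Hlast; have := d_tri x u.1 y; have := d_tri u.1 w.1 y; have := d_tri w.1 v.1 y.
  by rewrite (d_sym x u.1) (d_sym u.1 w.1) (d_sym v.1 y) in Hxu Duw Hyv *; lra.
have P_ge0 : 0 <= eta_m ^+ 2 * pi (z, n) / K0.
  by rewrite divr_ge0 ?mulr_ge0 ?sqr_ge0 // ltW ?pi_gt0 ?K0_gt0.
have Wu : d w.1 u.1 < 5/2 * e n.+2 by rewrite d_sym; lra.
have := floor_le_ell Sw erefl P_ge0 floor Su Lun Hstart Wu Hp Dwv.
by rewrite ler_pdivrMr ?K0_gt0 // => H; lra.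
Qed.

Lemma pi_c_le_ell x y : x <> y -> exists k0, forall k, (k0 <= k)%N ->
  forall u v, S u -> u.2 = k -> v.2 = k -> inB d a x u -> inB d a y v ->
  forall t, chainP adjr u t -> last u t = v ->
  pi_c d a Xs par rho x y <= K0 ^+ 3 / eta_m ^+ 2 * ell (u :: t).
Proof.
move=> Hxy; have a3 : 0 < 4 * a ^+ 3 by rewrite mulr_gt0 ?exprn_gt0 ?a_gt0.
have [k0 Hk0] := e_eventually_lt (divr_gt0 (d_gt0 Hxy) a3).
exists k0 => k Hk u v Su Lu Lv Hxu Hyv t Hp Hlast.
apply: sup_le_ge0 => [|_ [c Hc <-]].
  by rewrite mulr_ge0 ?divr_ge0 ?exprn_ge0 ?ell_ge0 // ltW ?K0_gt0.
rewrite mulrAC ler_pdivlMr ?exprn_gt0 // mulrC.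
apply: cset_pi_le_ell Hc _ Su Lu Hxu Lv Hyv Hp Hlast.
by rewrite mulrC -ltr_pdivlMr //; apply: Hk0.
Qed.

End HyperbolicFilling.

Theorem lemma3p20 (R : realType) (X : Type) (d : X -> X -> R) (a lam : R)
  (Xs : nat -> X -> Prop) (x0 : X) (par : X -> nat -> X)
  (rho : X * nat -> R) (eta_m eta_p K0 : R) :
  is_metric d -> seq_compact d -> doubling d -> diam d = 2^-1 ->
  6 <= lam -> lam <= a -> hyp_filling d a Xs x0 par ->
  (forall v, inS Xs v -> 0 < rho v) ->
  H1 Xs rho eta_m eta_p -> H2 d a lam Xs par rho K0 -> H3' d a lam Xs rho ->
  exists K2 : R, 1 <= K2 /\
    forall x y : X, x <> y -> exists k0 : nat, forall k : nat, (k0 <= k)%N ->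
      forall u v : X * nat, inS Xs u -> inS Xs v -> u.2 = k -> v.2 = k ->
        inB d a x u -> inB d a y v ->
        forall t : seq (X * nat), chainP (adj d a lam Xs par) u t -> last u t = v ->
          K2^-1 * pi_c d a Xs par rho x y <= ell_hat d a lam Xs par rho K0 eta_m (u :: t).
Proof.
move=> metric _ _ _ lam_ge6 lam_le_a filling _ [eta_gt0 [eta_le [eta_lt1 rho_bd]]].
move=> [K0_ge1 pi_horiz] Lh_ge1.
have key := pi_c_le_ell metric lam_ge6 lam_le_a filling eta_gt0
  (fun v Sv => (rho_bd v Sv).1) K0_ge1 pi_horiz Lh_ge1.
have K0_gt0 : 0 < K0 by apply: lt_le_trans K0_ge1.
have K2_gt0 : 0 < K0 ^+ 3 / eta_m ^+ 2 by rewrite divr_gt0 ?exprn_gt0.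
exists (K0 ^+ 3 / eta_m ^+ 2); split.
  rewrite ler_pdivlMr ?exprn_gt0 // mul1r.
  by have := exprn_ege1 3 K0_ge1; have := le_lt_trans eta_le eta_lt1; nra.
move=> x y /key [k0 Hk0]; exists k0 => k Hk u v Su _ Lu Lv Hxu Hyv t Hp Hlast.
by rewrite ler_pdivrMl //; apply: Hk0 Hk u v Su Lu Lv Hxu Hyv t Hp Hlast.
Qed.
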